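(* A class $\mathcal{C}$ of digraphs without parallel edges has bounded directed branch-width if and only if the class $\{\vec{L}(D): D\in\mathcal{C}\}$ of their directed line graphs has bounded bi-cut-rank-width. More precisely, for every digraph $D$ without parallel edges, \[\frac{\operatorname{bcrk}(\vec{L}(D))}{2} - 1 \;\le\; \operatorname{dbw}(D) \;\le\; 8\bigl(1 + 2^{\operatorname{bcrk}(\vec{L}(D))}\bigr).\]
   Context: All digraphs are finite and loopless; $\vec{xy}$ denotes a directed edge from $x$ to $y$. A layout of a symmetric function $f:2^U\to\mathbb{Z}$ (symmetric means $f(X)=f(U\setminus X)$) on a finite set $U$ is a pair $(T,\beta)$ with $T$ a tree of maximum degree at most three and $\beta$ a bijection from the leaves of $T$ to $U$. Each edge $xy$ of $T$ splits the leaves into those in the component of $T-xy$ containing $y$ (call this set $Y$) and the rest; the order of $xy$ is $f(\beta(Y))$. The width of the layout is the maximum order of an edge of $T$ (0 if $T$ has no edges), and the layout-$f$-width of $U$ is the minimum width over all layouts of $f$ on $U$. Directed branch-width: for a digraph $D$ and $X\subseteq E(D)$, let $S^V_X=\{y\in V(D): \exists x,z \text{ with } \vec{xy}\in E(D)\setminus X \text{ and } \vec{yz}\in X\}$, and $f_D(X)=|S^V_X\cup S^V_{E(D)\setminus X}|$. A directed branch decomposition of $D$ is a layout of $f_D$ on $E(D)$, and $\operatorname{dbw}(D)$ is the layout-$f_D$-width of $E(D)$. Directed line graph: $\vec{L}(D)$ has vertex set $E(D)$ and an edge $\vec{ef}$ whenever there are vertices $w,x,y$ of $D$ with $e=\vec{wx}$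 and $f=\vec{xy}$. Bi-cut-rank-width: for a digraph $D$ with adjacency matrix $M$ over $\mathrm{GF}(2)$ (rows/columns indexed by $V(D)$, $M_{uv}=1$ iff $\vec{uv}\in E(D)$), let $g(X)=\operatorname{rk}(M[V(D)\setminus X, X])+\operatorname{rk}(M[X,V(D)\setminus X])$, where $M[A,B]$ is the submatrix with rows in $A$ and columns in $B$. Then $\operatorname{bcrk}(D)$ is the layout-$g$-width of $V(D)$. *)

From HB Require Import structures.
From mathcomp Require Import all_boot all_order all_algebra.
From Stdlib Require Import ClassicalEpsilon.
Set Implicit Arguments. Unset Strict Implicit. Unset Printing Implicit Defensive.
Import GRing.Theory.

(* A tree: finite simple graph (symmetric irreflexive adjacency) that is
   connected and has no cycle (a cycle = a duplicate-free closed walk with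
   at least 3 vertices).  The empty graph is allowed (only relevant when
   U is empty). *)

Definition tdeg (T : finType) (t : rel T) (x : T) : nat := #|[set y | t x y]|.

Definition is_leaf (T : finType) (t : rel T) (x : T) : bool := tdeg t x <= 1.

Record layout (U : finType) := Layout {
  lT : finType;
  ladj : rel lT;
  lbeta : lT -> U;
  ladj_sym : symmetric ladj;
  ladj_irr : irreflexive ladj;
  ladj_connected : forall x y : lT, connect ladj x y;
  ladj_acyclic : forall c : seq lT, uniq c -> 2 < size c -> ~~ cycle ladj c;
  ladj_deg3 : forall x : lT, tdeg ladj x <= 3;
  lbeta_inj : {in is_leaf ladj &, injective lbeta};
  lbeta_surj : forall u : U, exists2 x, is_leaf ladj x & lbeta x = u
}.

Definition del_edge (T : finType) (t : rel T) (x y : T) : rel T :=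
  fun a b => t a b && ~~ (((a == x) && (b == y)) || ((a == y) && (b == x))).

Definition lside (U : finType) (L : layout U) (x y : lT L) : {set U} :=
  @lbeta U L @: [set z | is_leaf (@ladj U L) z && connect (del_edge (@ladj U L) x y) y z].

(* width of a layout: maximum order of an (oriented) edge, 0 if no edges *)
Definition lwidth (U : finType) (f : {set U} -> nat) (L : layout U) : nat :=
  \max_(p : lT L * lT L | @ladj U L p.1 p.2) f (@lside U L p.1 p.2).

Definition has_layout_of_width (U : finType) (f : {set U} -> nat) (k : nat) : Prop :=
  exists L : layout U, lwidth f L = k.

Definition has_layout_of_widthb (U : finType) (f : {set U} -> nat) (k : nat) : bool :=
  if excluded_middle_informative (has_layout_of_width f k) then true else false.

Lemma has_layout_of_widthbP (U : finType) (f : {set U} -> nat) :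
  (exists k, has_layout_of_width f k) -> exists k, has_layout_of_widthb f k.
Proof.
move=> [k Hk]; exists k; rewrite /has_layout_of_widthb.
by case: excluded_middle_informative.
Qed.

Definition layout_width (U : finType) (f : {set U} -> nat) : nat :=
  match excluded_middle_informative (exists k, has_layout_of_width f k) with
  | left H => ex_minn (has_layout_of_widthbP H)
  | right _ => 0
  end.

(* A digraph without parallel edges on vertex set V is a relation D : rel V
   (D x y iff there is an edge xy).  Its edge set: *)
Definition edges (V : finType) (D : rel V) : finType := {e : V * V | D e.1 e.2}.

Definition SV (V : finType) (D : rel V) (X : {set edges D}) : {set V} :=
  [set y : V | [exists e : edges D, [exists e' : edges D,
     [&& e \notin X, e' \in X, (val e).2 == y & (val e').1 == y]]]].

Definition fD (V : finType) (D : rel V) (X : {set edges D}) : nat :=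
  #|SV X :|: SV (~: X)|.

Definition dbw (V : finType) (D : rel V) : nat := layout_width (@fD V D).

Definition line_graph (V : finType) (D : rel V) : rel (edges D) :=
  fun e f => (val e).2 == (val f).1.

Definition adj_sub (W : finType) (r : rel W) (A B : {set W}) :
  'M['F_2]_(#|A|, #|B|) :=
  \matrix_(i < #|A|, j < #|B|)
    (if r (enum_val i) (enum_val j) then 1%R else 0%R : 'F_2).

Definition bicut (W : finType) (r : rel W) (X : {set W}) : nat :=
  \rank (adj_sub r (~: X) X) + \rank (adj_sub r X (~: X)).

Definition bcrk (W : finType) (r : rel W) : nat := layout_width (bicut r).
Arguments line_graph {V} D _ _.

From mathcomp Require Import all_boot all_order all_algebra.
From mathcomp Require Import lra.
From Stdlib Require Import ClassicalEpsilon.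
Import GRing.Theory Num.Theory.
Set Implicit Arguments. Unset Strict Implicit.

(* Both inequalities follow from a pointwise comparison of the two
   connectivity functions, since layouts of f_D on E(D) and of the cut-rank
   function of L(D) on V(L(D)) = E(D) are the same objects.

   For sets A, B of edges, the GF(2) adjacency matrix of L(D) with rows A and
   columns B has entry (e, e') = 1 iff head(e) = tail(e').  It factors through
   the set J(A, B) of vertices that are a head of an edge of A and a tail of
   an edge of B, and contains an identity submatrix indexed by J(A, B); hence
   its rank is exactly |J(A, B)|.  Since S^V_X = J(E \ X, X), this gives
     bicut(X) = |S^V_X| + |S^V_{E \ X}|,   so   f_D(X) <= bicut(X) <= 2 f_D(X).
   A general monotonicity lemma for layout-widths then yields
     dbw(D) <= bcrk(L(D)) <= 2 dbw(D),
   which is stronger than both stated bounds. *)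

Lemma lwidth_le (U : finType) (f g : {set U} -> nat) (c : nat) (L : layout U) :
  (forall X, g X <= c * f X) -> lwidth g L <= c * lwidth f L.
Proof.
move=> le_gf; apply/bigmax_leqP => p adj_p.
apply: leq_trans (le_gf _) _; rewrite leq_mul2l; apply/orP; right.
exact: (leq_bigmax_cond p).
Qed.

Lemma layout_widthP (U : finType) (f : {set U} -> nat) :
  (forall L : layout U, False) \/
  ((exists L : layout U, lwidth f L = layout_width f) /\
   forall L : layout U, layout_width f <= lwidth f L).
Proof.
rewrite /layout_width; case: excluded_middle_informative => [exL|noL].
- right; case: ex_minnP => m wit_m min_m; split.
  + by move: wit_m; rewrite /has_layout_of_widthb; case: excluded_middle_informative.
  + move=> L; apply: min_m; rewrite /has_layout_of_widthb.
    case: excluded_middle_informative => //= noW; exfalso; apply: noW.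
    by exists L.
- by left=> L; apply: noL; exists (lwidth f L); exists L.
Qed.

Lemma layout_width_nolayout (U : finType) (f : {set U} -> nat) :
  (forall L : layout U, False) -> layout_width f = 0.
Proof.
move=> noL; rewrite /layout_width; case: excluded_middle_informative => // exL.
by exfalso; case: exL => k [L _]; case: (noL L).
Qed.

Lemma layout_width_le (U : finType) (f g : {set U} -> nat) (c : nat) :
  (forall X, g X <= c * f X) -> layout_width g <= c * layout_width f.
Proof.
move=> le_gf; case: (layout_widthP f) => [noL|[[L opt_L] _]].
  by rewrite layout_width_nolayout.
case: (layout_widthP g) => [noL|[_ min_g]]; first by case: (noL L).
by apply: leq_trans (min_g L) _; rewrite -opt_L; apply: lwidth_le.
Qed.

Section LineGraphCutRank.
Local Open Scope ring_scope.

Lemma mxrank_mxsub (F : fieldType) m n m' n' (f : 'I_m' -> 'I_m)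
    (g : 'I_n' -> 'I_n) (A : 'M[F]_(m, n)) :
  (\rank (mxsub f g A) <= \rank A)%N.
Proof.
have -> : mxsub f g A = mxsub f id 1%:M *m (A *m mxsub id g 1%:M).
  by rewrite mulmx_colsub mulmx1 -{1}[A]mul1mx mxsub_mul.
exact: leq_trans (mxrankM_maxr _ _) (mxrankM_maxl _ _).
Qed.

Variables (V : finType) (D : rel V).

(* J(A, B): the vertices that are the head of an edge of A and the tail of an
   edge of B, i.e. the middle vertices of the arcs of L(D) from A to B. *)
Definition junction (A B : {set edges D}) : {set V} :=
  [set y : V | [exists e : edges D, [exists e' : edges D,
     [&& e \in A, e' \in B, (val e).2 == y & (val e').1 == y]]]].

(* Every arc of L(D) from A to B passes through J(A, B), so the matrix factors
   as (head incidence A x J) * (tail incidence J x B). *)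
Lemma rank_line_cut_le (A B : {set edges D}) :
  (\rank (adj_sub (line_graph D) A B) <= #|junction A B|)%N.
Proof.
pose J := junction A B.
pose P : 'M['F_2]_(#|A|, #|J|) := \matrix_(i, k)
  (if (val (enum_val i : edges D)).2 == enum_val k then 1 else 0).
pose Q : 'M['F_2]_(#|J|, #|B|) := \matrix_(k, j)
  (if (val (enum_val j : edges D)).1 == enum_val k then 1 else 0).
suff -> : adj_sub (line_graph D) A B = P *m Q.
  exact: leq_trans (mxrankM_maxl _ _) (rank_leq_col _).
apply/matrixP => i j; rewrite !mxE /line_graph; under eq_bigr do rewrite !mxE.
set e := (enum_val i : edges D); set e' := (enum_val j : edges D).
have [meet|nomeet] := boolP ((val e).2 == (val e').1); last first.
  rewrite big1 // => k _.
  case: eqP => hd; case: eqP => tl; rewrite ?mulr0 ?mul0r //.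
  by move: nomeet; rewrite hd tl eqxx.
have inJ : (val e').1 \in J.
  rewrite inE; apply/existsP; exists e; apply/existsP; exists e'.
  by rewrite !enum_valP meet eqxx.
rewrite (bigD1 (enum_rank_in inJ (val e').1)) //= enum_rankK_in //.
rewrite (eqP meet) eqxx mul1r big1 ?addr0 // => k neq_k.
case: eqP => [hd|_]; last by rewrite mul0r.
exfalso; apply: (negP neq_k); apply/eqP; apply: enum_val_inj.
by rewrite enum_rankK_in.
Qed.

(* Choosing, for each y in J(A, B), an edge of A entering y and an edge of B
   leaving y gives an identity submatrix of size |J(A, B)|. *)
Lemma rank_line_cut_ge (A B : {set edges D}) :
  (#|junction A B| <= \rank (adj_sub (line_graph D) A B))%N.
Proof.
pose J := junction A B.
have witness (k : 'I_#|J|) : exists p : 'I_#|A| * 'I_#|B|,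
    ((val (enum_val p.1 : edges D)).2 == enum_val k) &&
    ((val (enum_val p.2 : edges D)).1 == enum_val k).
  have := enum_valP k; rewrite inE.
  case/existsP=> e /existsP[e' /and4P[eA e'B hd tl]].
  by exists (enum_rank_in eA e, enum_rank_in e'B e'); rewrite /= !enum_rankK_in // hd tl.
have [g gP] := fin_all_exists witness.
have id_sub : mxsub (fun k => (g k).1) (fun k => (g k).2)
    (adj_sub (line_graph D) A B) = 1%:M.
  apply/matrixP => k l; rewrite !mxE /line_graph.
  case/andP: (gP k) => /eqP -> _; case/andP: (gP l) => _ /eqP ->.
  by rewrite (inj_eq enum_val_inj); case: (k == l).
by rewrite -[X in (X <= _)%N](mxrank1 'F_2 #|J|) -id_sub mxrank_mxsub.
Qed.

Lemma rank_line_cut (A B : {set edges D}) :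
  \rank (adj_sub (line_graph D) A B) = #|junction A B|.
Proof. by apply/eqP; rewrite eqn_leq rank_line_cut_le rank_line_cut_ge. Qed.

Lemma SV_junction (X : {set edges D}) : SV X = junction (~: X) X.
Proof.
apply/setP => y; rewrite !inE; apply: eq_existsb => e; apply: eq_existsb => e'.
by rewrite inE.
Qed.

Lemma bicut_line_graph (X : {set edges D}) :
  bicut (line_graph D) X = (#|SV X| + #|SV (~: X)|)%N.
Proof. by rewrite /bicut !rank_line_cut !SV_junction setCK. Qed.

Lemma fD_le_bicut (X : {set edges D}) : (fD X <= bicut (line_graph D) X)%N.
Proof. by rewrite bicut_line_graph; apply: leq_card_setU. Qed.

Lemma bicut_le_fD (X : {set edges D}) : (bicut (line_graph D) X <= 2 * fD X)%N.
Proof.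
rewrite bicut_line_graph mul2n -addnn.
by apply: leq_add; apply: subset_leq_card; rewrite ?subsetUl ?subsetUr.
Qed.

End LineGraphCutRank.

Theorem mainTheorem1 (V : finType) (D : rel V) (Dloopless : irreflexive D) :
  ((bcrk (line_graph D))%:R / 2 - 1 <= (dbw D)%:R :> rat)%R /\
  (dbw D <= 8 * (1 + 2 ^ bcrk (line_graph D)))%N.
Proof.
have dbw_le : dbw D <= bcrk (line_graph D).
  by rewrite -[bcrk _]mul1n; apply: layout_width_le => X; rewrite mul1n fD_le_bicut.
have bcrk_le : bcrk (line_graph D) <= 2 * dbw D.
  exact: layout_width_le (@bicut_le_fD V D).
split.
  have : ((bcrk (line_graph D))%:R <= 2 * (dbw D)%:R :> rat)%R.
    by rewrite -natrM ler_nat.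
  have : (0 <= (dbw D)%:R :> rat)%R by rewrite ler0n.
  lra.
apply: (leq_trans dbw_le); apply: leq_trans (ltnW (ltn_expl _ (ltnSn 1))) _.
by apply: leq_trans (leq_addl 1 _) (leq_pmull _ _).
Qed.
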